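(* Let $a,b,p,q$ be positive real numbers and consider the system of difference equations $$y_{n+1}=\frac{a z_n}{p+z_n}e^{-y_n},\qquad z_{n+1}=\frac{b y_n}{q+y_n}e^{-z_n},\qquad n=0,1,2,\dots$$ with nonnegative initial values $y_0,z_0$. Then: (i) the system always has the zero equilibrium $(0,0)$; (ii) if $\frac{ab}{pq}>1$, then the system has a unique positive equilibrium.
   Context: An equilibrium of the system is a pair $(\bar y,\bar z)$ with $\bar y=\frac{a\bar z}{p+\bar z}e^{-\bar y}$ and $\bar z=\frac{b\bar y}{q+\bar y}e^{-\bar z}$; it is positive if $\bar y>0$ and $\bar z>0$. *)

From Stdlib Require Import Reals.
Open Scope R_scope.

Definition Fy (a p : R) (y z : R) : R := a * z / (p + z) * exp (- y).
Definition Fz (b q : R) (y z : R) : R := b * y / (q + y) * exp (- z).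

Definition is_equilibrium (a b p q : R) (y z : R) : Prop :=
  y = Fy a p y z /\ z = Fz b q y z.

Definition is_positive_equilibrium (a b p q : R) (y z : R) : Prop :=
  is_equilibrium a b p q y z /\ 0 < y /\ 0 < z.

(** Dividing out the exponentials, a positive equilibrium satisfies
    [y e^y (p + z) = a z] and [z e^z (q + y) = b y].  The first equation
    determines [z = zeta y], an increasing function of [y]; multiplying the two
    equations and cancelling [y z] leaves the scalar equation
    [Phi y := (p + zeta y) (q + y) e^(y + zeta y) = a b].  Since [Phi] is
    strictly increasing, it has at most one root, and as [Phi 0 = p q < a b]
    while [Phi] exceeds [a b] before [y e^y] reaches [a], the intermediate value
    theorem provides one. *)
From Stdlib Require Import Reals Ranalysis5 Lra Psatz.
Open Scope R_scope.

Definition xexp (u : R) : R := u * exp u.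

Lemma xexp_increasing (u v : R) : 0 <= u -> u < v -> xexp u < xexp v.
Proof.
  unfold xexp; intros Hu Huv.
  pose proof (exp_increasing u v Huv); pose proof (exp_pos u); nra.
Qed.

Lemma xexp_pos (u : R) : 0 < u -> 0 < xexp u.
Proof. unfold xexp; intros Hu; pose proof (exp_pos u); nra. Qed.

Lemma xexp_surjective (c : R) : 0 < c -> exists u, 0 < u <= c /\ xexp u = c.
Proof.
  intros Hc.
  destruct (IVT_interv (fun u => xexp u - c) 0 c) as [u [Hu Eu]].
  - intros u _; unfold xexp; reg.
  - exact Hc.
  - unfold xexp; rewrite exp_0; lra.
  - unfold xexp; pose proof (exp_ineq1_le c); nra.
  - cbv beta in Eu.
    assert (u <> 0) by (intros ->; unfold xexp in Eu; rewrite exp_0 in Eu; lra).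
    exists u; split; lra.
Qed.

Lemma eq_mul_exp_opp (x c u : R) : x = c * exp (- u) <-> x * exp u = c.
Proof.
  rewrite exp_Ropp; pose proof (exp_pos u).
  split; intros E; [subst x | subst c]; field; lra.
Qed.

Section Equilibria.

Variables a b p q : R.
Hypotheses (ha : 0 < a) (hp : 0 < p) (hq : 0 < q).

Lemma zero_is_equilibrium : is_equilibrium a b p q 0 0.
Proof. unfold is_equilibrium, Fy, Fz; split; field; lra. Qed.

Lemma is_equilibriumE (y z : R) : 0 <= y -> 0 <= z ->
  is_equilibrium a b p q y z <->
  xexp y * (p + z) = a * z /\ xexp z * (q + y) = b * y.
Proof.
  intros Hy Hz; unfold is_equilibrium, Fy, Fz, xexp.
  rewrite !eq_mul_exp_opp.
  split; intros [E1 E2]; split;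
    solve [rewrite E1; field; lra | rewrite E2; field; lra
          | rewrite <- E1; field; lra | rewrite <- E2; field; lra].
Qed.

Definition zeta (y : R) : R := p * xexp y / (a - xexp y).

Definition Phi (y : R) : R := (p + zeta y) * (q + y) * exp (y + zeta y).

Lemma zeta_0 : zeta 0 = 0.
Proof. unfold zeta, xexp; rewrite Rmult_0_l, Rmult_0_r; field; lra. Qed.

Lemma zeta_pos (y : R) : 0 < y -> xexp y < a -> 0 < zeta y.
Proof.
  intros Hy Ha; unfold zeta; pose proof (xexp_pos y Hy).
  apply Rdiv_lt_0_compat; nra.
Qed.

Lemma zeta_nonneg (y : R) : 0 <= y -> xexp y < a -> 0 <= zeta y.
Proof.
  intros [Hy | <-] Ha; [left; exact (zeta_pos y Hy Ha) | rewrite zeta_0; lra].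
Qed.

Lemma zeta_increasing (y y' : R) :
  0 <= y -> y < y' -> xexp y' < a -> zeta y < zeta y'.
Proof.
  intros Hy Hyy' Ha; unfold zeta.
  pose proof (xexp_increasing y y' Hy Hyy').
  assert (0 <= xexp y) by (unfold xexp; pose proof (exp_pos y); nra).
  assert (D : p * xexp y' / (a - xexp y') - p * xexp y / (a - xexp y)
             = p * a * (xexp y' - xexp y) / ((a - xexp y) * (a - xexp y')))
    by (field; lra).
  enough (0 < p * a * (xexp y' - xexp y) / ((a - xexp y) * (a - xexp y'))) by lra.
  apply Rdiv_lt_0_compat; repeat apply Rmult_lt_0_compat; lra.
Qed.

Lemma Phi_increasing (y y' : R) :
  0 <= y -> y < y' -> xexp y' < a -> Phi y < Phi y'.
Proof.
  intros Hy Hyy' Ha; unfold Phi.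
  pose proof (zeta_increasing y y' Hy Hyy' Ha).
  assert (Ha0 : xexp y < a) by (pose proof (xexp_increasing y y' Hy Hyy'); lra).
  pose proof (zeta_nonneg y Hy Ha0).
  pose proof (exp_increasing (y + zeta y) (y' + zeta y') ltac:(lra)).
  pose proof (exp_pos (y + zeta y)).
  assert ((p + zeta y) * (q + y) < (p + zeta y') * (q + y'))
    by (apply Rmult_le_0_lt_compat; lra).
  apply Rmult_le_0_lt_compat; nra.
Qed.

Lemma Phi_injective (y y' : R) : 0 <= y -> 0 <= y' ->
  xexp y < a -> xexp y' < a -> Phi y = Phi y' -> y = y'.
Proof.
  intros Hy Hy' Ha Ha' E.
  destruct (Rtotal_order y y') as [H | [H | H]]; auto.
  - pose proof (Phi_increasing y y' Hy H Ha'); lra.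
  - pose proof (Phi_increasing y' y Hy' H Ha); lra.
Qed.

Lemma is_positive_equilibriumE (y z : R) :
  is_positive_equilibrium a b p q y z <->
  0 < y /\ xexp y < a /\ z = zeta y /\ Phi y = a * b.
Proof.
  unfold is_positive_equilibrium.
  split.
  - intros [Eq [Hy Hz]].
    apply is_equilibriumE in Eq as [E1 E2]; try lra.
    pose proof (xexp_pos y Hy).
    assert (Ha : xexp y < a) by nra.
    assert (Ez : z = zeta y).
    { unfold zeta; apply (Rmult_eq_reg_r (a - xexp y)); [field_simplify; nra | lra]. }
    unfold Phi; rewrite <- Ez; repeat split; try lra.
    apply (Rmult_eq_reg_l (y * z)); [|nra].
    unfold xexp in E1, E2; rewrite exp_plus.
    transitivity ((y * exp y * (p + z)) * (z * exp z * (q + y))); [ring|].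
    rewrite E1, E2; ring.
  - intros (Hy & Ha & Ez & E).
    unfold Phi in E; rewrite <- Ez in E.
    assert (Hz : 0 < z) by (rewrite Ez; apply zeta_pos; assumption).
    assert (E1 : xexp y * (p + z) = a * z) by (rewrite Ez; unfold zeta; field; lra).
    split; [|lra].
    apply is_equilibriumE; try lra; split; [exact E1|].
    apply (Rmult_eq_reg_l a); [|lra].
    transitivity (xexp y * (p + z) * exp z * (q + y)); [rewrite E1; unfold xexp; ring|].
    transitivity (y * ((p + z) * (q + y) * exp (y + z))); [unfold xexp; rewrite exp_plus; ring|].
    rewrite E; ring.
Qed.

Lemma Phi_0 : Phi 0 = p * q.
Proof. unfold Phi; rewrite zeta_0, !Rplus_0_r, exp_0; ring. Qed.

Lemma Phi_root_exists :
  p * q < a * b -> exists y, 0 < y /\ xexp y < a /\ Phi y = a * b.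
Proof.
  intros Hab.
  set (M := a * b / q).
  assert (HM : 0 < M) by (unfold M; apply Rdiv_lt_0_compat; nra).
  (* [xexp y1 = a M / (p + M)] gives [zeta y1 = M], whence [Phi y1 > M q = a b] *)
  destruct (xexp_surjective (a * M / (p + M))) as [y1 [Hy1 E1]];
    [apply Rdiv_lt_0_compat; nra|].
  assert (Ha1 : xexp y1 < a)
    by (rewrite E1; apply (Rmult_lt_reg_r (p + M)); [lra|]; field_simplify; nra).
  assert (Z1 : zeta y1 = M).
  { unfold zeta; rewrite E1.
    replace (a - a * M / (p + M)) with (a * p / (p + M)) by (field; lra).
    field; split; lra. }
  assert (Hbelow : forall y, 0 <= y <= y1 -> xexp y < a).
  { intros y Hy; destruct (Req_dec y y1) as [->|]; [lra|].
    pose proof (xexp_increasing y y1 ltac:(lra) ltac:(lra)); lra. }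
  destruct (IVT_interv (fun y => Phi y - a * b) 0 y1) as [y [Hy E]].
  - intros y Hy; pose proof (Hbelow y Hy); unfold Phi, zeta, xexp in *; reg; lra.
  - lra.
  - rewrite Phi_0; lra.
  - unfold Phi; rewrite Z1.
    pose proof (exp_ineq1_le (y1 + M)).
    assert (M * q = a * b) by (unfold M; field; lra).
    assert (M * q < (p + M) * (q + y1)) by nra.
    assert ((p + M) * (q + y1) * 1 <= (p + M) * (q + y1) * exp (y1 + M))
      by (apply Rmult_le_compat_l; nra).
    lra.
  - cbv beta in E.
    assert (y <> 0) by (intros ->; rewrite Phi_0 in E; lra).
    exists y; repeat split; [lra | apply Hbelow; lra | lra].
Qed.

End Equilibria.

Theorem theorem3p1 (a b p q : R) (ha : 0 < a) (hb : 0 < b) (hp : 0 < p) (hq : 0 < q) :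
  is_equilibrium a b p q 0 0 /\
  (a * b / (p * q) > 1 ->
   exists y z, is_positive_equilibrium a b p q y z /\
     forall y' z', is_positive_equilibrium a b p q y' z' -> y' = y /\ z' = z).
Proof.
  split; [exact (zero_is_equilibrium a b p q hp hq)|].
  intros Hab.
  assert (Hpq : p * q < a * b).
  { apply (Rmult_lt_compat_r (p * q)) in Hab; [|nra].
    unfold Rdiv in Hab; rewrite Rmult_assoc, Rinv_l in Hab; nra. }
  destruct (Phi_root_exists a b p q ha hp hq Hpq) as (y & Hy & Ha & E).
  exists y, (zeta a p y); split.
  - apply is_positive_equilibriumE; auto.
  - intros y' z' H'.
    apply is_positive_equilibriumE in H' as (Hy' & Ha' & -> & E'); auto.
    assert (y' = y) as -> by (apply (Phi_injective a p q ha hp hq); lra).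
    split; reflexivity.
Qed.
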